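(* Fix reals $a<b$, $S=T\cap[a,b]$, a natural number $m\ge1$, an integer $\ell\ge1$ and reals $a=u_1<u_2<\cdots<u_\ell<u_{\ell+1}=b$. Let $\mathcal A$ be any set of constraints on real tuples $(c,(x_i^{(k)})_{1\le i\le \ell,\,0\le k\le 2m-1})$ such that for every $S$-code $C$ the tuple $(|C|,(x_i^{(k)}(C)))$ satisfies $\mathcal A$. Let $c^*(m)$ be the supremum of $c$ over all real $c,z,(x_i^{(k)})$ satisfying: (5) $\begin{pmatrix}1&c\\ c&z\end{pmatrix}\succeq0$ and $z=c+x_1^{(0)}+\cdots+x_\ell^{(0)}$; (6) $c+\sum_{d=0}^k p_{kd}\sum_{i=1}^\ell x_i^{(d)}\ge0$ for $k=1,\ldots,2m-1$; (7) $H_m(x_i^{(0)},x_i^{(1)},\ldots,x_i^{(2m-1)},[u_i,u_{i+1}])\succeq0$ for $i=1,\ldots,\ell$; (8) the constraints $\mathcal A$. Then $A(\mathbf M,S)\le c^*(m)$.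
   Context: $\mathbf M$ is a 2-point-homogeneous space with its associated real function $\tau(x,y)$, $\tau_0:=\tau(x,x)$, and $T=\{\tau(x,y):x,y\in\mathbf M\}$. Its zonal spherical functions $\Phi_k$ are assumed to be real polynomials of degree $k$, $\Phi_k(t)=\sum_{d=0}^k p_{kd}t^d$, with $\Phi_k(\tau_0)=1$, such that for every $k\ge0$ and every finite $\{x_1,\ldots,x_N\}\subset\mathbf M$ the matrix $(\Phi_k(\tau(x_i,x_j)))_{i,j}$ is positive semidefinite. An $S$-code is a finite $C\subset\mathbf M$ with $\tau(x,y)\in S$ for all distinct $x,y\in C$; $A(\mathbf M,S)$ is the largest cardinality of an $S$-code. For an $S$-code $C=\{z_1,\ldots,z_c\}$, $x_i^{(k)}(C):=\sum \tau(z_p,z_q)^k$, the sum over ordered pairs $(p,q)$ with $p\ne q$ and $\tau(z_p,z_q)\in[u_i,u_{i+1})$ for $i<\ell$, resp. $\tau(z_p,z_q)\in[u_\ell,b]$ for $i=\ell$ (with $\tau^0:=1$). For reals $s_0,\ldots,s_{2m-1}$ and $\alpha<\beta$: $R_m=(s_{i+j-2})_{i,j=1}^m$, $F_m^+(\alpha)=(s_{i+j-1}-\alpha s_{i+j-2})$, $F_m^-(\beta)=(\beta s_{i+j-2}-s_{i+j-1})$, $H_m(s_0,\ldots,s_{2m-1},[\alpha,\beta])=\operatorname{diag}(R_m,F_m^+(\alpha),F_m^-(\beta))$. *)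

From HB Require Import structures.
From mathcomp Require Import all_boot all_order all_algebra.
From mathcomp Require Import boolp classical_sets reals constructive_ereal ereal.
Set Implicit Arguments. Unset Strict Implicit. Unset Printing Implicit Defensive.
Import Order.TTheory GRing.Theory Num.Theory.
Local Open Scope ring_scope.
Local Open Scope classical_set_scope.

Section Defs.
Variable R : realType.

Definition psd (n : nat) (A : 'M[R]_n) : Prop :=
  A^T = A /\ forall v : 'cV[R]_n, 0 <= (v^T *m A *m v) 0 0.

Definition two_point_homogeneous (M : Type) (tau : M -> M -> R) : Prop :=
  exists G : set (M -> M),
    (forall g, G g -> bijective g /\ forall x y, tau (g x) (g y) = tau x y) /\
    (forall x y x' y', tau x y = tau x' y' ->
        exists g, G g /\ g x = x' /\ g y = y').

Variable M : Type.
Variable tau : M -> M -> R.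

Definition Sset (a b : R) : set R :=
  [set t | (exists x y, tau x y = t) /\ a <= t <= b].

Definition is_code (S : set R) (N : nat) (z : 'I_N -> M) : Prop :=
  injective z /\ forall p q : 'I_N, p != q -> S (tau (z p) (z q)).

(* bins (0-indexed): bin i is [u i, u (i+1)) for i+1 < l, and [u (l-1), u l] for i = l-1 *)
Definition in_bin (u : nat -> R) (l i : nat) (t : R) : bool :=
  if (i.+1 < l)%N then (u i <= t) && (t < u i.+1) else (u i <= t) && (t <= u l).

Definition code_x (u : nat -> R) (l m N : nat) (z : 'I_N -> M)
  : 'I_l -> 'I_(2 * m) -> R :=
  fun i k => \sum_(p < N) \sum_(q < N | (p != q) && in_bin u l i (tau (z p) (z q)))
               tau (z p) (z q) ^+ k.

End Defs.

Definition ext (R : realType) (n : nat) (f : 'I_n -> R) (k : nat) : R :=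
  match @insub nat (fun k => (k < n)%N) _ k with Some j => f j | None => 0 end.

(* H_m(s_0..s_{2m-1},[alpha,beta]) = diag(R_m, F_m^+(alpha), F_m^-(beta)) *)
Definition Hmat (R : realType) (m : nat) (s : nat -> R) (alpha beta : R)
  : 'M[R]_(m + m + m) :=
  block_mx
    (block_mx (\matrix_(i < m, j < m) s (i + j)%N) 0
              0 (\matrix_(i < m, j < m) (s (i + j).+1 - alpha * s (i + j)%N)))
    0 0 (\matrix_(i < m, j < m) (beta * s (i + j)%N - s (i + j).+1)).

Definition feasible (R : realType) (Phi : nat -> {poly R}) (m l : nat)
  (u : nat -> R) (A : R -> ('I_l -> 'I_(2 * m) -> R) -> Prop)
  (c z : R) (x : 'I_l -> 'I_(2 * m) -> R) : Prop :=
  psd (\matrix_(i < 2, j < 2) (if i == j then (if i == 0 :> nat then 1 else z) else c))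
  /\ z = c + \sum_(i < l) ext (x i) 0
  /\ (forall k : nat, (1 <= k <= 2 * m - 1)%N ->
        0 <= c + \sum_(d < k.+1) (Phi k)`_d * \sum_(i < l) ext (x i) d)
  /\ (forall i : 'I_l, psd (Hmat m (ext (x i)) (u i) (u i.+1)))
  /\ A c x.

Definition cstar (R : realType) (Phi : nat -> {poly R}) (m l : nat)
  (u : nat -> R) (A : R -> ('I_l -> 'I_(2 * m) -> R) -> Prop) : \bar R :=
  ereal_sup [set c%:E | c in [set c | exists z x, feasible Phi u A c z x]].

(* The code itself provides a feasible point: c = |C|, z = |C|^2 and x = x(C).
   Condition (5) holds because [[1, c], [c, c^2]] is the Gram matrix of (1, c)
   and z - c counts the ordered pairs of distinct points.  Condition (6) is the
   all-ones quadratic form of the positive semidefinite matrix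
   (Phi_k(tau(z_p, z_q))), whose diagonal contributes exactly |C| since
   Phi_k(tau_0) = 1.  Each block of H_m in (7) is a Hankel moment matrix of the
   distances falling in [u_i, u_(i+1)], weighted by 1, t - u_i or u_(i+1) - t,
   all nonnegative on that bin. *)

From HB Require Import structures.
From mathcomp Require Import all_boot all_order all_algebra.
From mathcomp Require Import boolp classical_sets reals constructive_ereal ereal.
From mathcomp Require Import ring lra zify.
Set Implicit Arguments. Unset Strict Implicit. Unset Printing Implicit Defensive.
Import Order.TTheory GRing.Theory Num.Theory.
Local Open Scope ring_scope.

Section Bins.
Variables (R : realType) (u : nat -> R) (l : nat).
Hypothesis u_incr : forall i, (i < l)%N -> u i < u i.+1.

Lemma breakpoints_nondecr : {in gtn l.+1 &, {homo u : i j / (i <= j)%N >-> i <= j}}.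
Proof.
apply: Order.NatMonotonyTheory.nondecn_inP => [i j il jl k|i _ il].
  by rewrite !inE in il jl *; lia.
by rewrite inE ltnS in il; exact/ltW/u_incr.
Qed.

Lemma in_bin_bounds i t : (i < l)%N -> in_bin u l i t -> u i <= t <= u i.+1.
Proof.
rewrite /in_bin => il; case: ifP => [_ /andP[-> /ltW //]|last_bin].
by have -> : i.+1 = l by lia.
Qed.

Lemma in_bin_uniq i j t :
  (i < l)%N -> (j < l)%N -> in_bin u l i t -> in_bin u l j t -> i = j.
Proof.
wlog ij : i j / (i <= j)%N => [W il jl bi bj|il jl bi bj].
  by case: (leqP i j) => [|/ltnW] ij; [exact: W | exact/esym/W].
apply/eqP; rewrite eqn_leq ij /=; apply: contraTT bi; rewrite -ltnNge => ij'.
rewrite /in_bin ifT; last by lia.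
have /andP[ujt _] := in_bin_bounds jl bj.
have uij : u i.+1 <= u j by apply: breakpoints_nondecr; rewrite ?inE; lia.
by apply/negP => /andP[_]; lra.
Qed.

Lemma in_bin_exists t : (0 < l)%N -> u 0 <= t <= u l -> exists i : 'I_l, in_bin u l i t.
Proof.
move=> l_gt0 /andP[u0t tul].
case: (@arg_maxnP _ (Ordinal l_gt0) (fun j => u j <= t) val u0t) => i uit i_max.
exists i; rewrite /in_bin uit /=; case: ifP => [il|_ //].
rewrite ltNge; apply/negP => uit'.
by have := i_max (Ordinal il) uit'; rewrite /= ltnn.
Qed.

Lemma sum_in_bin (g t : R) : (0 < l)%N -> u 0 <= t <= u l ->
  \sum_(i < l) (if in_bin u l i t then g else 0) = g.
Proof.
move=> l_gt0 /(in_bin_exists l_gt0) [i0 bin_i0].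
rewrite (bigD1 i0) //= bin_i0 big1 ?addr0 // => j ji0.
case: ifP => // bin_j; case/eqP: ji0; apply: val_inj.
exact: in_bin_uniq (ltn_ord j) (ltn_ord i0) bin_j bin_i0.
Qed.

End Bins.

Lemma extE (R : realType) n (f : 'I_n -> R) k (kn : (k < n)%N) :
  ext f k = f (Ordinal kn).
Proof. by rewrite /ext insubT /=; congr f; apply: val_inj. Qed.

Lemma sum_split_diag (R : ringType) N (G : 'I_N -> 'I_N -> R) :
  (forall p, G p p = 1) ->
  \sum_p \sum_q G p q = N%:R + \sum_p \sum_(q | p != q) G p q.
Proof.
move=> G_diag; have -> : N%:R = \sum_(p < N) 1 :> R by rewrite sumr_const card_ord.
rewrite -big_split /=.
apply: eq_bigr => p _; rewrite (bigD1 p) //= G_diag; congr (_ + _).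
by apply: eq_bigl => q; rewrite eq_sym.
Qed.

Section Psd.
Variable R : realType.

Lemma quad_formE n (A : 'M[R]_n) (v : 'cV[R]_n) :
  (v^T *m A *m v) 0 0 = \sum_i \sum_j v i 0 * A i j * v j 0.
Proof.
rewrite mxE; under eq_bigr => j _ do rewrite mxE big_distrl /=.
rewrite exchange_big; apply: eq_bigr => i _; apply: eq_bigr => j _.
by rewrite mxE.
Qed.

Lemma psd_sum_ge0 n (A : 'M[R]_n) : psd A -> 0 <= \sum_i \sum_j A i j.
Proof.
case=> _ /(_ (const_mx 1)); rewrite quad_formE.
by under eq_bigr do under eq_bigr do rewrite !mxE mulr1 mul1r.
Qed.

Lemma psd_block_diag n1 n2 (A : 'M[R]_n1) (B : 'M[R]_n2) :
  psd A -> psd B -> psd (block_mx A 0 0 B).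
Proof.
move=> [tA qA] [tB qB]; split; first by rewrite tr_block_mx tA tB !trmx0.
move=> v; rewrite -(vsubmxK v) tr_col_mx mul_row_block !mulmx0 addr0 add0r.
by rewrite mul_row_col mxE addr_ge0.
Qed.

Lemma psd_moment_matrix n (I : finType) (P : pred I) (w t : I -> R) (A : 'M[R]_n) :
  (forall k, P k -> 0 <= w k) ->
  (forall i j : 'I_n, A i j = \sum_(k | P k) w k * t k ^+ (i + j)) ->
  psd A.
Proof.
move=> w_ge0 AE; split; first by apply/matrixP => i j; rewrite mxE !AE addnC.
move=> v; rewrite quad_formE.
have -> : \sum_i \sum_j v i 0 * A i j * v j 0 =
    \sum_(k | P k) w k * (\sum_i v i 0 * t k ^+ i) ^+ 2.
  under eq_bigr do under eq_bigr do rewrite AE big_distrr big_distrl /=.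
  under eq_bigr do rewrite exchange_big /=.
  rewrite exchange_big /=; apply: eq_bigr => k _.
  rewrite expr2 mulr_suml mulr_sumr; apply: eq_bigr => i _.
  rewrite mulr_sumr mulr_sumr; apply: eq_bigr => j _.
  by rewrite exprD; ring.
by apply: sumr_ge0 => k Pk; rewrite mulr_ge0 ?w_ge0 ?sqr_ge0.
Qed.

Lemma psd_rank_one2 (c : R) :
  psd (\matrix_(i < 2, j < 2) (if i == j then (if i == 0 :> nat then 1 else c ^+ 2) else c)).
Proof.
split; first by apply/matrixP => i j; rewrite !mxE eq_sym; case: eqP => [->|].
move=> v; rewrite quad_formE !big_ord_recl !big_ord0 !mxE /=.
set v0 := v ord0 0; set v1 := v (lift ord0 ord0) 0.
by rewrite [X in 0 <= X](_ : _ = (v0 + c * v1) ^+ 2) ?sqr_ge0 //; ring.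
Qed.

End Psd.

Section CodeMoments.
Variables (R : realType) (M : Type) (tau : M -> M -> R).
Variables (u : nat -> R) (l m N : nat) (z : 'I_N -> M).
Hypothesis u_incr : forall i, (i < l)%N -> u i < u i.+1.
Hypothesis l_gt0 : (0 < l)%N.
Hypothesis z_range : forall p q, p != q -> u 0 <= tau (z p) (z q) <= u l.

Local Notation x := (@code_x R M tau u l m N z).

Lemma ext_code_xE (i : 'I_l) k : (k < 2 * m)%N ->
  ext (x i) k = \sum_p \sum_(q | (p != q) && in_bin u l i (tau (z p) (z q)))
                  tau (z p) (z q) ^+ k.
Proof. by move=> km; rewrite (extE _ km). Qed.

Lemma sum_code_x k : (k < 2 * m)%N ->
  \sum_(i < l) ext (x i) k = \sum_p \sum_(q | p != q) tau (z p) (z q) ^+ k.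
Proof.
move=> km; under eq_bigr => i _ do rewrite ext_code_xE //.
under eq_bigr do under eq_bigr do rewrite big_mkcondr /=.
rewrite exchange_big; apply: eq_bigr => p _.
rewrite exchange_big; apply: eq_bigr => q pq.
by rewrite sum_in_bin ?z_range.
Qed.

Lemma sum_code_x_poly (P : {poly R}) k : (size P <= k.+1)%N -> (k < 2 * m)%N ->
  \sum_(d < k.+1) P`_d * \sum_(i < l) ext (x i) d =
  \sum_p \sum_(q | p != q) P.[tau (z p) (z q)].
Proof.
move=> sizeP km.
have dm (d : 'I_k.+1) : (d < 2 * m)%N by apply: leq_ltn_trans km; rewrite -ltnS.
under eq_bigr => d _ do rewrite sum_code_x // mulr_sumr.
rewrite exchange_big; apply: eq_bigr => p _.
under eq_bigr do rewrite mulr_sumr; rewrite exchange_big; apply: eq_bigr => q _.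
by rewrite (horner_coef_wide _ sizeP).
Qed.

Lemma sum_code_x0 : (0 < m)%N -> N%:R + \sum_(i < l) ext (x i) 0 = N%:R ^+ 2.
Proof.
move=> m_gt0; rewrite sum_code_x ?muln_gt0 //.
under eq_bigr do under eq_bigr do rewrite expr0.
rewrite -(@sum_split_diag _ _ (fun _ _ => 1)) //.
by rewrite !sumr_const !card_ord expr2 mulr_natr.
Qed.

Lemma code_x_Hmat_psd (i : 'I_l) : psd (Hmat m (ext (x i)) (u i) (u i.+1)).
Proof.
pose P (pq : 'I_N * 'I_N) := (pq.1 != pq.2) && in_bin u l i (tau (z pq.1) (z pq.2)).
pose t (pq : 'I_N * 'I_N) := tau (z pq.1) (z pq.2).
have xE k : (k < 2 * m)%N -> ext (x i) k = \sum_(pq | P pq) t pq ^+ k.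
  by move=> km; rewrite ext_code_xE // pair_big_dep.
have t_bin pq : P pq -> u i <= t pq <= u i.+1.
  by case/andP=> _; apply: in_bin_bounds.
have ab_lt (a b : 'I_m) : ((a + b).+1 < 2 * m)%N.
  by have := ltn_ord a; have := ltn_ord b; lia.
apply: psd_block_diag; first apply: psd_block_diag.
- apply: (@psd_moment_matrix _ _ _ P (fun=> 1) t) => // a b.
  by rewrite mxE (xE _ (ltnW (ab_lt a b))); apply: eq_bigr => pq _; rewrite mul1r.
- apply: (@psd_moment_matrix _ _ _ P (fun pq => t pq - u i) t) => [pq /t_bin|a b].
    by case/andP; rewrite subr_ge0.
  rewrite mxE (xE _ (ab_lt a b)) (xE _ (ltnW (ab_lt a b))) mulr_sumr -sumrB.
  by apply: eq_bigr => pq _; rewrite exprS; ring.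
- apply: (@psd_moment_matrix _ _ _ P (fun pq => u i.+1 - t pq) t) => [pq /t_bin|a b].
    by case/andP=> _; rewrite subr_ge0.
  rewrite mxE (xE _ (ab_lt a b)) (xE _ (ltnW (ab_lt a b))) mulr_sumr -sumrB.
  by apply: eq_bigr => pq _; rewrite exprS; ring.
Qed.

End CodeMoments.

Theorem theorem6p1 (R : realType) (M : Type) (tau : M -> M -> R) (tau0 : R)
  (Phi : nat -> {poly R})
  (Htph : two_point_homogeneous tau)
  (Htau0 : forall x, tau x x = tau0)
  (Hdeg : forall k, size (Phi k) = k.+1)
  (Hnorm : forall k, (Phi k).[tau0] = 1)
  (Hpsd : forall (k N : nat) (z : 'I_N -> M), injective z ->
            psd (\matrix_(i < N, j < N) (Phi k).[tau (z i) (z j)]))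
  (a b : R) (hab : a < b) (m : nat) (hm : (1 <= m)%N) (l : nat) (hl : (1 <= l)%N)
  (u : nat -> R) (hu0 : u 0%N = a) (hul : u l = b)
  (hu : forall i : nat, (i < l)%N -> u i < u i.+1)
  (A : R -> ('I_l -> 'I_(2 * m) -> R) -> Prop)
  (HA : forall (N : nat) (z : 'I_N -> M), is_code tau (Sset tau a b) z ->
          A N%:R (@code_x R M tau u l m N z)) :
  forall (N : nat) (z : 'I_N -> M), is_code tau (Sset tau a b) z ->
    ((N%:R : R)%:E <= cstar Phi u A)%E.
Proof.
move=> N z [z_inj z_S]; pose x := @code_x R M tau u l m N z.
have z_range p q : p != q -> u 0 <= tau (z p) (z q) <= u l.
  by case/z_S=> _; rewrite hu0 hul.
apply: ereal_sup_ubound; exists N%:R => //; exists (N%:R + \sum_i ext (x i) 0), x.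
split; first by rewrite (sum_code_x0 hu hl z_range hm); exact: psd_rank_one2.
split=> //; split.
  move=> k /andP[k_gt0 k_lt]; rewrite (sum_code_x_poly hu hl z_range) ?Hdeg //; last lia.
  rewrite -sum_split_diag; last by move=> p; rewrite Htau0 Hnorm.
  by move: (psd_sum_ge0 (Hpsd k N z z_inj)); under eq_bigr do under eq_bigr do rewrite mxE.
by split; [exact: code_x_Hmat_psd | exact: HA].
Qed.
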